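(* Let $\mathcal M=\langle\mathcal C,\mathcal S,\{\mathcal R_i\}_{i\in I}\rangle$ be a model and $\mathcal G\in\mathcal M$. There exists a set $\mathcal X_{\mathcal G}\subseteq\mathcal T'^{<\omega}$ such that $\mathcal G=\mathcal X_{\mathcal G}\leadsto\mathcal S$.
   Context: $\lambda\mu$-terms: $t::= x\mid \lambda x.t\mid (t\;t)\mid \mu a.t\mid (a\;t)$ over disjoint infinite sets of $\lambda$-variables and $\mu$-variables; reduction $(\lambda x.u\;v)\triangleright u[x:=v]$, $(\mu a.u\;v)\triangleright\mu a.u[a:=^*v]$ ($u[a:=^*v]$ replaces each subterm $(a\;w)$ by $(a\;(w\;v))$), $\triangleright^*$ its reflexive transitive compatible closure. $\mathcal S$ is saturated if $v\triangleright^*u\in\mathcal S$ implies $v\in\mathcal S$; for an infinite set $\mathcal C$ of $\mu$-variables, $\mathcal S$ is $\mathcal C$-saturated if saturated and $t\in\mathcal S$ implies $\mu a.t,(a\;t)\in\mathcal S$ for all $a\in\mathcal C$. $\mathcal K\leadsto\mathcal L=\{t:(t\;u)\in\mathcal L\ \forall u\in\mathcal K\}$. $\mathcal T'$ is the set of terms together with the $\mu$-variables; for $\pi\in\mathcal T'^{<\omega}$ (finite sequences): $(t\;\emptyset)=t$, $(t\;u\pi')=((t\;u)\;\pi')$ for a term $u$, $(t\;a\pi')=((a\;t)\;\pi')$ for a $\mu$-variable $a$; for $\mathcal X\subseteq\mathcal T'^{<\omega}$, $\mathcal X\leadsto\mathcal S=\{t:(t\;\pi)\in\mathcal S\ \forall\pi\in\mathcal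 X\}$. A model $\mathcal M=\langle\mathcal C,\mathcal S,\{\mathcal R_i\}_{i\in I}\rangle$: $\mathcal S$ is $\mathcal C$-saturated, each $\mathcal R_i=\mathcal X_i\leadsto\mathcal S$ for some $\mathcal X_i\subseteq\mathcal T'^{<\omega}$, and $\mathcal M$ is the smallest set of sets of terms containing $\mathcal S$ and all $\mathcal R_i$ and closed under $\leadsto$. *)

(* lambda-mu-terms in locally nameless representation:
   bound lambda-variables / bound mu-variables are de Bruijn indices
   (two separate index namespaces), free lambda-variables and free
   mu-variables are names (nat).  "Terms" in the paper's sense are the
   locally closed raw terms (lc t = true); alpha-equivalence is built in. *)
From Stdlib Require Import List Arith Bool Relations.
Import ListNotations.

Inductive term : Type :=
| BVar : nat -> term
| FVar : nat -> term
| Lam  : term -> term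
| App  : term -> term -> term
| Mu   : term -> term
| BCmd : nat -> term -> term    (* (a t), a a bound mu-variable (index) *)
| FCmd : nat -> term -> term.   (* (a t), a a free mu-variable a *)

Fixpoint lc_at (k j : nat) (t : term) : bool :=
  match t with
  | BVar i => i <? k
  | FVar _ => true
  | Lam t => lc_at (S k) j t
  | App t u => lc_at k j t && lc_at k j u
  | Mu t => lc_at k (S j) t
  | BCmd i t => (i <? j) && lc_at k j t
  | FCmd _ t => lc_at k j t
  end.

Definition lc (t : term) : Prop := lc_at 0 0 t = true.

Fixpoint fv (t : term) : list nat :=
  match t with
  | BVar _ => []
  | FVar x => [x]
  | Lam t | Mu t | BCmd _ t | FCmd _ t => fv t
  | App t u => fv t ++ fv u
  end.

Fixpoint fmv (t : term) : list nat :=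
  match t with
  | BVar _ | FVar _ => []
  | Lam t | Mu t | BCmd _ t => fmv t
  | FCmd a t => a :: fmv t
  | App t u => fmv t ++ fmv u
  end.

Fixpoint open_rec (k : nat) (u : term) (t : term) : term :=
  match t with
  | BVar i => if i =? k then u else BVar i
  | FVar x => FVar x
  | Lam t => Lam (open_rec (S k) u t)
  | App t1 t2 => App (open_rec k u t1) (open_rec k u t2)
  | Mu t => Mu (open_rec k u t)
  | BCmd i t => BCmd i (open_rec k u t)
  | FCmd a t => FCmd a (open_rec k u t)
  end.

Definition open (t u : term) : term := open_rec 0 u t.

Fixpoint mopen (j : nat) (a : nat) (t : term) : term :=
  match t with
  | BVar i => BVar i
  | FVar x => FVar x
  | Lam t => Lam (mopen j a t)
  | App t1 t2 => App (mopen j a t1) (mopen j a t2)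
  | Mu t => Mu (mopen (S j) a t)
  | BCmd i t => if i =? j then FCmd a (mopen j a t) else BCmd i (mopen j a t)
  | FCmd b t => FCmd b (mopen j a t)
  end.

Fixpoint mclose (j : nat) (a : nat) (t : term) : term :=
  match t with
  | BVar i => BVar i
  | FVar x => FVar x
  | Lam t => Lam (mclose j a t)
  | App t1 t2 => App (mclose j a t1) (mclose j a t2)
  | Mu t => Mu (mclose (S j) a t)
  | BCmd i t => BCmd i (mclose j a t)
  | FCmd b t => if b =? a then BCmd j (mclose j a t) else FCmd b (mclose j a t)
  end.

Definition mu_abs (a : nat) (t : term) : term := Mu (mclose 0 a t).

(* structural substitution u[a :=* v] for the bound mu-variable of index j:
   every subterm (a w) becomes (a (w v)) *)
Fixpoint msubst (j : nat) (v : term) (t : term) : term :=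
  match t with
  | BVar i => BVar i
  | FVar x => FVar x
  | Lam t => Lam (msubst j v t)
  | App t1 t2 => App (msubst j v t1) (msubst j v t2)
  | Mu t => Mu (msubst (S j) v t)
  | BCmd i t => if i =? j then BCmd i (App (msubst j v t) v)
                else BCmd i (msubst j v t)
  | FCmd b t => FCmd b (msubst j v t)
  end.

Inductive step : term -> term -> Prop :=
| st_beta : forall t u, step (App (Lam t) u) (open t u)
| st_mu : forall t v, step (App (Mu t) v) (Mu (msubst 0 v t))
| st_lam : forall t t' x, ~ In x (fv t) -> ~ In x (fv t') ->
    step (open t (FVar x)) (open t' (FVar x)) -> step (Lam t) (Lam t')
| st_mub : forall t t' a, ~ In a (fmv t) -> ~ In a (fmv t') ->
    step (mopen 0 a t) (mopen 0 a t') -> step (Mu t) (Mu t')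
| st_app1 : forall t t' u, step t t' -> step (App t u) (App t' u)
| st_app2 : forall t u u', step u u' -> step (App t u) (App t u')
| st_bcmd : forall i t t', step t t' -> step (BCmd i t) (BCmd i t')
| st_fcmd : forall a t t', step t t' -> step (FCmd a t) (FCmd a t').

Definition red_star : term -> term -> Prop := clos_refl_trans term step.

Definition tset := term -> Prop.
Definition is_tset (S : tset) : Prop := forall t, S t -> lc t.

Definition saturated (S : tset) : Prop :=
  is_tset S /\ forall u v, lc v -> red_star v u -> S u -> S v.

Definition infinite_muvars (C : nat -> Prop) : Prop :=
  forall l : list nat, exists a, C a /\ ~ In a l.

Definition C_saturated (C : nat -> Prop) (S : tset) : Prop :=
  saturated S /\
  forall t a, C a -> S t -> S (mu_abs a t) /\ S (FCmd a t).

Definition arrow (K L : tset) : tset :=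
  fun t => lc t /\ forall u, K u -> L (App t u).

(* T' = terms + mu-variables; stacks = finite sequences over T' *)
Definition tprime := (term + nat)%type.
Definition stack := list tprime.

Definition wf_stack (pi : stack) : Prop :=
  forall u, In (inl u) pi -> lc u.

Definition is_stack_set (X : stack -> Prop) : Prop :=
  forall pi, X pi -> wf_stack pi.

Fixpoint app_stack (t : term) (pi : stack) : term :=
  match pi with
  | [] => t
  | inl u :: pi' => app_stack (App t u) pi'
  | inr a :: pi' => app_stack (FCmd a t) pi'
  end.

Definition stack_arrow (X : stack -> Prop) (S : tset) : tset :=
  fun t => lc t /\ forall pi, X pi -> S (app_stack t pi).

(* the model generated by S and R_i = X_i ~> S: the smallest set of sets of
   terms containing S and all R_i and closed under ~> *)
Inductive in_model (S : tset) (I : Type) (X : I -> stack -> Prop) : tset -> Prop :=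
| im_S : in_model S I X S
| im_R : forall i, in_model S I X (stack_arrow (X i) S)
| im_arrow : forall K L, in_model S I X K -> in_model S I X L ->
    in_model S I X (arrow K L).

(* S itself is S = {[]} ~> S, each R_i is
   given as X_i ~> S, and an arrow K ~> (X_L ~> S) equals Y ~> S where Y is
   the set of stacks u :: pi with u in K and pi in X_L, since (t u) pi is t (u :: pi).
   Only the fact that the sets involved consist of terms is needed. *)
From Stdlib Require Import List FunctionalExtensionality PropExtensionality.
Import ListNotations.

Lemma tset_ext (A B : tset) : (forall t, A t <-> B t) -> A = B.
Proof.
  intro HAB; apply functional_extensionality; intro t.
  apply propositional_extensionality, HAB.
Qed.

Lemma lc_App (t u : term) : lc t -> lc u -> lc (App t u).
Proof. unfold lc; simpl; intros -> ->; reflexivity. Qed.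

Definition nil_stacks : stack -> Prop := fun pi => pi = [].

Lemma is_stack_set_nil : is_stack_set nil_stacks.
Proof. intros pi -> u []. Qed.

Lemma stack_arrow_nil (S : tset) : is_tset S -> stack_arrow nil_stacks S = S.
Proof.
  intro hS; apply tset_ext; intro t; unfold stack_arrow; split.
  - intros [_ Ht]; exact (Ht [] eq_refl).
  - intro Ht; split; [exact (hS t Ht) |].
    intros pi ->; exact Ht.
Qed.

Definition cons_stacks (K : tset) (XL : stack -> Prop) : stack -> Prop :=
  fun pi => exists u pi', pi = inl u :: pi' /\ K u /\ XL pi'.

Lemma is_stack_set_cons (K : tset) (XL : stack -> Prop) :
  is_tset K -> is_stack_set XL -> is_stack_set (cons_stacks K XL).
Proof.
  intros hK hXL pi [u [pi' [-> [Ku XLpi']]]] w [Hw | Hw].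
  - injection Hw as <-; exact (hK u Ku).
  - exact (hXL pi' XLpi' w Hw).
Qed.

Lemma arrow_stack_arrow (K : tset) (XL : stack -> Prop) (S : tset) :
  is_tset K ->
  arrow K (stack_arrow XL S) = stack_arrow (cons_stacks K XL) S.
Proof.
  intro hK; apply tset_ext; intro t; unfold arrow, stack_arrow; split.
  - intros [lct Ht]; split; [exact lct |].
    intros pi [u [pi' [-> [Ku XLpi']]]].
    exact (proj2 (Ht u Ku) pi' XLpi').
  - intros [lct Ht]; split; [exact lct |].
    intros u Ku; split; [exact (lc_App _ _ lct (hK u Ku)) |].
    intros pi XLpi; apply (Ht (inl u :: pi)).
    exists u, pi; auto.
Qed.

Theorem mainTheorem6
  (C : nat -> Prop) (S : tset) (I : Type) (X : I -> stack -> Prop)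
  (hC : infinite_muvars C) (hS : C_saturated C S)
  (hX : forall i, is_stack_set (X i))
  (G : tset) (hG : in_model S I X G) :
  exists XG : stack -> Prop, is_stack_set XG /\ G = stack_arrow XG S.
Proof.
  destruct hS as [[hSt _] _].
  induction hG as [| i | K L _ [XK [hXK ->]] _ [XL [hXL ->]]].
  - exists nil_stacks; split; [exact is_stack_set_nil |].
    symmetry; exact (stack_arrow_nil S hSt).
  - exists (X i); split; [apply hX | reflexivity].
  - exists (cons_stacks (stack_arrow XK S) XL).
    assert (hK : is_tset (stack_arrow XK S)) by (intros t [lct _]; exact lct).
    split; [exact (is_stack_set_cons _ _ hK hXL) | exact (arrow_stack_arrow _ XL S hK)].
Qed.
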